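(* Let $SP_t(k)$ denote the smallest $n$ such that $PPL_t(n)=k$, and write $(w)_4$ for the integer whose base-4 representation is the digit string $w$. Then $SP_t(3k+2)=((12)^k2)_4$ for all $k\geq 0$; $SP_t(3k)=(1(12)^{k-1}2)_4$ for all $k\geq 1$; and $SP_t(3k+1)=(2(12)^{k-1}2)_4$ for all $k\geq 1$. Here $(12)^k$ denotes the digit string $12$ repeated $k$ times.
   Context: The Thue-Morse word $t=t[1]t[2]\cdots=abbabaabbaababba\cdots$ is the fixed point starting with $a$ of the morphism $a\mapsto abba,\ b\mapsto baab$. A palindrome is a word $p=p[1]\cdots p[n]$ with $p[i]=p[n-i+1]$ for all $i$. $PPL_t(n)$ is the minimal number of nonempty palindromes whose concatenation equals the prefix of $t$ of length $n$. *)

From mathcomp Require Import all_boot.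
Set Implicit Arguments. Unset Strict Implicit. Unset Printing Implicit Defensive.

(* Letters: a = false, b = true. *)
Definition tm_morph (w : seq bool) : seq bool :=
  flatten [seq [:: x; ~~ x; ~~ x; x] | x <- w].

(* phi^n(a) has length 4^n >= n and is a prefix of the fixed point t,
   so the prefix of t of length n is the first n letters of phi^n(a). *)
Definition tm_prefix (n : nat) : seq bool := take n (iter n tm_morph [:: false]).

Definition palindrome (p : seq bool) : bool := p == rev p.

Definition pal_factorization (w : seq bool) (s : seq (seq bool)) : Prop :=
  flatten s = w /\ all (fun p => (p != [::]) && palindrome p) s.

Definition PPL_t_is (n k : nat) : Prop :=
  (exists s, pal_factorization (tm_prefix n) s /\ size s = k) /\
  (forall s, pal_factorization (tm_prefix n) s -> k <= size s).

Definition SP_t_is (k N : nat) : Prop :=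
  PPL_t_is N k /\ (forall m, m < N -> ~ PPL_t_is m k).

(* (w)_4 : value of the base-4 digit string w (most significant first). *)
Definition base4 (ds : seq nat) : nat := foldl (fun acc d => acc * 4 + d) 0 ds.

Definition rep12 (k : nat) : seq nat := flatten (nseq k [:: 1; 2]).

From mathcomp Require Import all_boot zify.
Set Implicit Arguments. Unset Strict Implicit. Unset Printing Implicit Defensive.

(* The function [ppl] defined by ppl (4q) = ppl q, ppl (4q+1) = ppl q + 1,
   ppl (4q+2) = min (ppl q) (ppl (q+1)) + 2 and ppl (4q+3) = ppl (q+1) + 1
   is PPL_t.  Upper bound: the Thue-Morse morphism maps a palindromic
   factorization of t[0,q) to one of t[0,4q), and its last palindrome may be
   trimmed by one or two letters at each end, the trimmed letters becoming
   one-letter palindromes.  Lower bound: every palindromic factor t[i,n)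
   satisfies ppl n <= ppl i + 1, because odd palindromes of t have length at
   most 3 and even ones are images under the morphism of shorter palindromes.
   Finally, appending 2j+1 base-4 digits to p yields at most
   min (ppl p) (ppl (p+1)) + 3j + 2, while appending the digits (12)^j adds
   exactly 3j when ppl p <= ppl (p+1); comparing the two locates the first
   occurrence of each value. *)

Lemma mod4_ind (P : nat -> Prop) :
  (forall q, P (4 * q)) -> (forall q, P (4 * q + 1)) ->
  (forall q, P (4 * q + 2)) -> (forall q, P (4 * q + 3)) -> forall n, P n.
Proof.
move=> P0 P1 P2 P3 n; rewrite (divn_eq n 4).
have : n %% 4 < 4 by rewrite ltn_mod.
case: (n %% 4) => [|[|[|[|r]]]] // _; rewrite ?addn0 mulnC; auto.
Qed.

(** * The Thue-Morse word by positions *)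

(* [tm n] is the letter t[n+1] (with b = true): the parity of the binary digit
   sum of n. *)
Fixpoint tm_fuel (f n : nat) : bool :=
  if f is f.+1 then (if n is 0 then false else odd n (+) tm_fuel f n./2) else false.

Definition tm (n : nat) : bool := tm_fuel n n.

Lemma tm_fuel_enough f g n : n <= f -> n <= g -> tm_fuel f n = tm_fuel g n.
Proof.
elim: f g n => [|f IH] [|g] [|n] //= le_nf le_ng.
by rewrite (IH g) //; lia.
Qed.

Lemma tm_halfE n : tm n = odd n (+) tm n./2.
Proof.
case: n => [|n] //; rewrite /tm /=; congr (_ (+) _); apply: tm_fuel_enough; lia.
Qed.

Lemma tm2 n : tm (2 * n) = tm n.
Proof. by rewrite tm_halfE oddM (_ : (2 * n)./2 = n) //; lia. Qed.

Lemma tm2_1 n : tm (2 * n + 1) = ~~ tm n.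
Proof.
by rewrite tm_halfE oddD oddM (_ : (2 * n + 1)./2 = n) //; lia.
Qed.

Lemma tm4 q r : r < 4 -> tm (4 * q + r) = tm q (+) ((r == 1) || (r == 2)).
Proof.
case: r => [|[|[|[|r]]]] // _.
- by rewrite addn0 (_ : 4 * q = 2 * (2 * q)) ?tm2 ?addbF //; lia.
- by rewrite (_ : 4 * q + 1 = 2 * (2 * q) + 1) ?tm2_1 ?tm2 ?addbT //; lia.
- by rewrite (_ : 4 * q + 2 = 2 * (2 * q + 1)) ?tm2 ?tm2_1 ?addbT //; lia.
- by rewrite (_ : 4 * q + 3 = 2 * (2 * q + 1) + 1) ?tm2_1 ?negbK ?addbF //; lia.
Qed.

Lemma tm4_0 q : tm (4 * q) = tm q.
Proof. by rewrite -[4 * q]addn0 tm4 // addbF. Qed.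
Lemma tm4_1 q : tm (4 * q + 1) = ~~ tm q.
Proof. by rewrite tm4 // addbT. Qed.
Lemma tm4_2 q : tm (4 * q + 2) = ~~ tm q.
Proof. by rewrite tm4 // addbT. Qed.
Lemma tm4_3 q : tm (4 * q + 3) = tm q.
Proof. by rewrite tm4 // addbF. Qed.

(** * Palindromic factors *)

(* The factor of t at the 0-based positions i, ..., n-1 is a palindrome. *)
Definition tm_pal (i n : nat) : Prop :=
  forall x y, i <= x -> i <= y -> x + y + 1 = i + n -> tm x = tm y.

Lemma tm_pal_shrink i n d : tm_pal i n -> tm_pal (i + d) (n - d).
Proof. by move=> pal x y *; apply: pal; lia. Qed.

Lemma tm_pal_succ i : tm_pal i i.+1.
Proof. by move=> x y *; have -> : x = y by lia. Qed.

Lemma tm_pal_4mul i n : tm_pal i n -> tm_pal (4 * i) (4 * n).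
Proof.
move=> pal x y le_ix le_iy Exy.
rewrite (divn_eq x 4) (divn_eq y 4) !(mulnC _ 4) !tm4 ?ltn_mod //.
by rewrite (pal (x %/ 4) (y %/ 4)); lia.
Qed.

Lemma tm_pal_desubst a b r n :
  r < 4 -> tm_pal (4 * a + r) n -> n + r = 4 * b -> tm_pal a b.
Proof.
move=> lt_r4 pal En.
have lt_pal x y : a <= x -> x < y -> x + y + 1 = a + b -> tm x = tm y.
  by move=> *; rewrite -tm4_3 -(tm4_0 y); apply: pal; lia.
move=> x y le_ax le_ay Exy; case: (ltngtP x y) => [lt_xy|lt_yx|-> //].
- exact: lt_pal.
- by symmetry; apply: lt_pal; lia.
Qed.

Lemma tm_pal5_free j : ~ (tm j = tm (j + 4) /\ tm (j + 1) = tm (j + 3)).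
Proof.
elim/mod4_ind: j => q.
- by rewrite tm4_1 tm4_3; case: (tm q); case.
- have -> : 4 * q + 1 + 4 = 4 * q.+1 + 1 by lia.
  have -> : 4 * q + 1 + 1 = 4 * q + 2 by lia.
  have -> : 4 * q + 1 + 3 = 4 * q.+1 by lia.
  by rewrite !tm4_1 tm4_2 tm4_0; case: (tm q); case: (tm q.+1); case.
- have -> : 4 * q + 2 + 4 = 4 * q.+1 + 2 by lia.
  have -> : 4 * q + 2 + 1 = 4 * q + 3 by lia.
  have -> : 4 * q + 2 + 3 = 4 * q.+1 + 1 by lia.
  by rewrite !tm4_2 tm4_3 tm4_1; case: (tm q); case: (tm q.+1); case.
- have -> : 4 * q + 3 + 1 = 4 * q.+1 by lia.
  have -> : 4 * q + 3 + 3 = 4 * q.+1 + 2 by lia.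
  by rewrite tm4_0 tm4_2; case: (tm q.+1); case.
Qed.

Lemma tm_pal_odd i n : tm_pal i n -> odd (n - i) -> n = i + 1 \/ n = i + 3.
Proof.
move=> pal odd_len; have [c Ec] : exists c, i + n = 2 * c + 1.
  by exists ((i + n) %/ 2); lia.
have [le_n3|lt_3n] := leqP n (i + 3); first lia.
case: (@tm_pal5_free (c - 2)); split; apply: pal; lia.
Qed.

Lemma tm_pal_even i n : tm_pal i n -> i < n -> ~~ odd (n - i) -> 4 %| i + n.
Proof.
move=> pal lt_in even_len; have [c Ec] : exists c, i + n = 2 * c.
  by exists ((i + n) %/ 2); lia.
case/boolP: (odd c) => odd_c; last by apply/dvdnP; exists (c %/ 2); lia.
have [u Eu] : exists u, c = 2 * u + 1 by exists (c %/ 2); lia.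
have : tm (2 * u) = tm (2 * u + 1) by apply: pal; lia.
by rewrite tm2_1 tm2; case: (tm u).
Qed.

Definition tm_factor (i n : nat) : seq bool := [seq tm x | x <- iota i (n - i)].

Lemma size_tm_factor i n : size (tm_factor i n) = n - i.
Proof. by rewrite size_map size_iota. Qed.

Lemma nth_tm_factor i n k : k < n - i -> nth false (tm_factor i n) k = tm (i + k).
Proof. by move=> lt_k; rewrite (nth_map 0) ?size_iota ?nth_iota. Qed.

Lemma tm_factor_cat i m n : i <= m <= n -> tm_factor i m ++ tm_factor m n = tm_factor i n.
Proof.
case/andP=> le_im le_mn; rewrite -map_cat -{2}(subnKC le_im) -iotaD.
by congr (map _ (iota _ _)); lia.
Qed.

Lemma tm_palP i n : i <= n -> reflect (tm_pal i n) (palindrome (tm_factor i n)).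
Proof.
move=> le_in; apply: (iffP eqP) => [Erev x y le_ix le_iy Exy | pal].
  have := congr1 (nth false ^~ (x - i)) Erev.
  rewrite nth_rev size_tm_factor ?nth_tm_factor; try lia.
  have -> : i + (x - i) = x by lia.
  by have -> : i + (n - i - (x - i).+1) = y by lia.
apply: (@eq_from_nth _ false); rewrite ?size_rev // size_tm_factor => k lt_k.
rewrite nth_rev size_tm_factor // !nth_tm_factor; try lia.
by apply: pal; lia.
Qed.

Lemma tm_morph_factor i n : tm_morph (tm_factor i n) = tm_factor (4 * i) (4 * n).
Proof.
rewrite /tm_factor -mulnBr; move: (n - i) => m.
elim: m i => [|m IH] j; first by rewrite muln0.
rewrite mulnS /= add0n {1}/tm_morph /= -/(tm_morph _) IH.
have -> : 4 * j.+1 = (4 * j).+4 by lia.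
congr [:: _, _, _, _ & _].
- by rewrite tm4_0.
- by rewrite -(addn1 (4 * j)) tm4_1.
- by rewrite -(addn2 (4 * j)) tm4_2.
- by rewrite -(addn3 (4 * j)) tm4_3.
Qed.

Lemma tm_prefixE n : tm_prefix n = tm_factor 0 n.
Proof.
have iter_morph k : iter k tm_morph [:: false] = tm_factor 0 (4 ^ k).
  by elim: k => [|k IH] //=; rewrite IH tm_morph_factor expnS.
rewrite /tm_prefix iter_morph /tm_factor -map_take take_iota !subn0.
by rewrite (minn_idPl _) // ltnW // ltn_expl.
Qed.

(** * The recursion for PPL_t *)

Fixpoint ppl_fuel (f n : nat) : nat :=
  if f is f.+1 then
    if n is 0 then 0 else
    match n %% 4 with
    | 0 => ppl_fuel f (n %/ 4)
    | 1 => (ppl_fuel f (n %/ 4)).+1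
    | 2 => (minn (ppl_fuel f (n %/ 4)) (ppl_fuel f (n %/ 4).+1)).+2
    | _ => (ppl_fuel f (n %/ 4).+1).+1
    end
  else 0.

Definition ppl (n : nat) : nat := ppl_fuel n n.

Lemma ppl_fuel_enough f g n : n <= f -> n <= g -> ppl_fuel f n = ppl_fuel g n.
Proof.
elim: f g n => [|f IH] [|g] [|n] //= le_nf le_ng.
have := divn_eq n.+1 4; have : n.+1 %% 4 < 4 by rewrite ltn_mod.
set q := n.+1 %/ 4.
case: (n.+1 %% 4) => [|[|[|[|r]]]] // _ En.
- by rewrite (IH g) //; lia.
- by rewrite (IH g) //; lia.
- by rewrite (IH g q) ?(IH g q.+1) //; lia.
- by rewrite (IH g q.+1) //; lia.
Qed.

Lemma ppl_rec q r : r < 4 -> 0 < 4 * q + r ->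
  ppl (4 * q + r) = match r with
                    | 0 => ppl q
                    | 1 => (ppl q).+1
                    | 2 => (minn (ppl q) (ppl q.+1)).+2
                    | _ => (ppl q.+1).+1
                    end.
Proof.
move=> lt_r4 n_gt0; rewrite /ppl -(prednK n_gt0) /= (prednK n_gt0).
have -> : (4 * q + r) %/ 4 = q by lia.
have -> : (4 * q + r) %% 4 = r by lia.
have fuelE p : p <= (4 * q + r).-1 -> ppl_fuel (4 * q + r).-1 p = ppl p.
  by move=> le_p; apply: ppl_fuel_enough.
by case: r lt_r4 n_gt0 fuelE => [|[|[|[|r]]]] // _ _ fuelE;
  rewrite ?(fuelE q) ?(fuelE q.+1) //; lia.
Qed.

Lemma ppl0 : ppl 0 = 0. Proof. by []. Qed.

Lemma ppl4 q : ppl (4 * q) = ppl q.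
Proof. by case: q => [|q] //; rewrite -[4 * _]addn0 ppl_rec //; lia. Qed.

Lemma ppl4_1 q : ppl (4 * q + 1) = (ppl q).+1.
Proof. by rewrite ppl_rec //; lia. Qed.

Lemma ppl4_2 q : ppl (4 * q + 2) = (minn (ppl q) (ppl q.+1)).+2.
Proof. by rewrite ppl_rec //; lia. Qed.

Lemma ppl4_3 q : ppl (4 * q + 3) = (ppl q.+1).+1.
Proof. by rewrite ppl_rec //; lia. Qed.

Lemma ppl1 : ppl 1 = 1. Proof. by []. Qed.
Lemma ppl2 : ppl 2 = 2. Proof. by []. Qed.
Lemma ppl3 : ppl 3 = 2. Proof. by []. Qed.

Lemma ppl_succ n : ppl n.+1 <= (ppl n).+1 /\ ppl n <= (ppl n.+1).+1.
Proof.
elim/ltn_ind: n => n IH; move: IH; elim/mod4_ind: n => q IH.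
- by rewrite -(addn1 (4 * q)) ppl4_1 ppl4; lia.
- have := IH q; rewrite (_ : (4 * q + 1).+1 = 4 * q + 2) ?ppl4_1 ?ppl4_2; lia.
- have := IH q; rewrite (_ : (4 * q + 2).+1 = 4 * q + 3) ?ppl4_2 ?ppl4_3; lia.
- by rewrite (_ : (4 * q + 3).+1 = 4 * q.+1) ?ppl4_3 ?ppl4; lia.
Qed.

(** * Lower bound *)

Lemma ppl_pal3 i : tm_pal i (i + 3) -> ppl (i + 3) <= (ppl i).+1.
Proof.
move=> pal; have : tm i = tm (i + 2) by apply: pal; lia.
elim/mod4_ind: i {pal} => q.
- by rewrite tm4_0 tm4_2; case: (tm q).
- by rewrite -addnA tm4_1 tm4_3; case: (tm q).
- move=> _; have -> : 4 * q + 2 + 3 = 4 * q.+1 + 1 by lia.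
  by rewrite ppl4_1 ppl4_2; have := ppl_succ q; lia.
- move=> _; have -> : 4 * q + 3 + 3 = 4 * q.+1 + 2 by lia.
  by rewrite ppl4_2 ppl4_3; lia.
Qed.

Lemma ppl_4mul_sub_le a b r : r < 4 -> 0 < b ->
  ppl b <= (ppl a).+1 -> (1 < r -> ppl b.-1 <= (ppl a.+1).+1) ->
  ppl (4 * b - r) <= (ppl (4 * a + r)).+1.
Proof.
case: r => [|[|[|[|r]]]] // _ b_gt0 le_ab le_ab1.
- by rewrite subn0 addn0 !ppl4.
- by rewrite (_ : 4 * b - 1 = 4 * b.-1 + 3) ?ppl4_3 ?ppl4_1 ?prednK //; lia.
- have := le_ab1 isT.
  by rewrite (_ : 4 * b - 2 = 4 * b.-1 + 2) ?ppl4_2 ?prednK //; lia.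
- have := le_ab1 isT.
  by rewrite (_ : 4 * b - 3 = 4 * b.-1 + 1) ?ppl4_1 ?ppl4_3 //; lia.
Qed.

Lemma ppl_pal i n : i <= n -> tm_pal i n -> ppl n <= (ppl i).+1.
Proof.
elim/ltn_ind: n i => n IH i le_in pal.
have [-> |ne_ni] := eqVneq n i; first exact: leqnSn.
have {le_in ne_ni}lt_in : i < n by lia.
case/boolP: (odd (n - i)) => [odd_len|even_len].
  have [En|En] := tm_pal_odd pal odd_len; rewrite En in pal *; last exact: ppl_pal3.
  by rewrite addn1; case: (ppl_succ i).
have /dvdnP [s Es] := tm_pal_even pal lt_in even_len.
set a := i %/ 4; set r := i %% 4; set b := s - a.
have lt_r4 : r < 4 by rewrite ltn_mod.
have Ei : i = 4 * a + r by rewrite [i](divn_eq i 4) mulnC.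
have Eb : n + r = 4 * b by lia.
have pal_ab : tm_pal a b by apply: (tm_pal_desubst lt_r4 _ Eb); rewrite -Ei.
have -> : n = 4 * b - r by lia.
rewrite Ei; apply: ppl_4mul_sub_le => //; first lia.
  by apply: IH pal_ab; lia.
move=> lt_1r; have := tm_pal_shrink (d := 1) pal_ab; rewrite addn1 subn1.
by apply: IH; lia.
Qed.

Lemma ppl_factorization i n s : i <= n -> flatten s = tm_factor i n ->
  all (fun p => (p != [::]) && palindrome p) s -> ppl n <= ppl i + size s.
Proof.
elim: s i => [|p s IH] i le_in /=.
  by move=> /(congr1 size); rewrite size_tm_factor /= => ? _; have -> : n = i; lia.
move=> Ecat /andP [/andP [p_ne0 pal_p] pals].
have p_gt0 : 0 < size p by rewrite lt0n size_eq0.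
have le_pn : i + size p <= n.
  by have := congr1 size Ecat; rewrite size_cat size_tm_factor; lia.
have /andP [/eqP Ep /eqP Es] :
    (p == tm_factor i (i + size p)) && (flatten s == tm_factor (i + size p) n).
  rewrite -eqseq_cat; last by rewrite size_tm_factor addKn.
  by rewrite tm_factor_cat ?Ecat // leq_addr.
have pal_ip : tm_pal i (i + size p) by apply/tm_palP; [exact: leq_addr | rewrite -Ep].
have := IH _ le_pn Es pals; have := ppl_pal (leq_addr _ i) pal_ip; lia.
Qed.

(** * Upper bound *)

(* t[0,n) is a concatenation of at most k nonempty palindromes. *)
Inductive pal_reach : nat -> nat -> Prop :=
| pal_reach0 k : pal_reach 0 k
| pal_reach_pal m n k : pal_reach m k -> m < n -> tm_pal m n -> pal_reach n k.+1.

Lemma pal_reachS n k : pal_reach n k -> pal_reach n k.+1.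
Proof.
by elim=> [k0|m n' k' _ IH lt_mn pal]; [exact: pal_reach0 | exact: pal_reach_pal pal].
Qed.

Lemma pal_reach_le m n k : pal_reach m k -> m <= n -> tm_pal m n -> pal_reach n k.+1.
Proof.
move=> reach_m; rewrite leq_eqVlt => /orP [/eqP <- _|]; first exact: pal_reachS.
exact: pal_reach_pal.
Qed.

Lemma pal_reach_letters n k d : pal_reach n k -> pal_reach (n + d) (k + d).
Proof.
move=> reach_n; elim: d => [|d IH]; first by rewrite !addn0.
by rewrite !addnS; apply: pal_reach_pal IH (ltnSn _) (@tm_pal_succ _).
Qed.

(* The image t[4m,4n) of the last palindrome is trimmed by d letters at each
   end, and these d letters of t[4m,4m+d) become one-letter palindromes. *)
Lemma pal_reach_4mul_sub n k d : d <= 2 -> pal_reach n k -> pal_reach (4 * n - d) (k + d).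
Proof.
move=> le_d2 reach_n; elim: reach_n d le_d2 => [k0|m n' k' _ IH lt_mn pal] d le_d2.
  by rewrite muln0; exact: pal_reach0.
rewrite addSn; apply: (@pal_reach_le (4 * m + d)).
- by have := IH 0 isT; rewrite subn0 addn0 => /(pal_reach_letters d).
- lia.
- exact: tm_pal_shrink (tm_pal_4mul pal).
Qed.

Lemma pal_reach_ppl n : pal_reach n (ppl n).
Proof.
elim/ltn_ind: n => n IH.
have reach_quarter q : 4 * q <= n -> pal_reach (4 * q) (ppl q).
  case: q => [|q] le_qn; first exact: pal_reach0.
  have lt_qn : q.+1 < n by lia.
  by have := pal_reach_4mul_sub (d := 0) isT (IH _ lt_qn); rewrite subn0 addn0.
move: IH reach_quarter; elim/mod4_ind: n => q IH reach_quarter.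
- by rewrite ppl4; apply: reach_quarter.
- by rewrite ppl4_1 -(addn1 (ppl q)); apply: pal_reach_letters; apply: reach_quarter; lia.
- rewrite ppl4_2; have [le_q|lt_q] := leqP (ppl q) (ppl q.+1).
    rewrite -(addn2 (ppl q)); apply: pal_reach_letters; apply: reach_quarter; lia.
  rewrite -(addn2 (ppl q.+1)) (_ : 4 * q + 2 = 4 * q.+1 - 2); last lia.
  by apply: pal_reach_4mul_sub => //; apply: IH; lia.
- rewrite ppl4_3 -(addn1 (ppl q.+1)) (_ : 4 * q + 3 = 4 * q.+1 - 1); last lia.
  by apply: pal_reach_4mul_sub => //; apply: IH; lia.
Qed.

Lemma pal_reach_factorization n k : pal_reach n k ->
  exists2 s, pal_factorization (tm_factor 0 n) s & size s <= k.
Proof.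
elim=> [k0|m n' k' _ [s [Es pals] le_sk] lt_mn pal]; first by exists [::].
exists (rcons s (tm_factor m n')); last by rewrite size_rcons.
split; first by rewrite flatten_rcons Es tm_factor_cat //; exact: ltnW.
rewrite all_rcons pals andbT -size_eq0 size_tm_factor -lt0n subn_gt0 lt_mn /=.
by apply/tm_palP; rewrite // ltnW.
Qed.

Lemma PPL_t_is_ppl n : PPL_t_is n (ppl n).
Proof.
have ppl_le s : pal_factorization (tm_prefix n) s -> ppl n <= size s.
  by rewrite tm_prefixE => -[Es pals]; have := ppl_factorization (leq0n n) Es pals.
split=> //; have [s fact le_s] := pal_reach_factorization (pal_reach_ppl n).
rewrite -tm_prefixE in fact; exists s; split=> //.
by apply/eqP; rewrite eqn_leq le_s ppl_le.
Qed.

Lemma PPL_t_is_uniq n k : PPL_t_is n k -> k = ppl n.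
Proof.
move=> [[s [fact <-]] min_k]; have [[s' [fact' <-]] min_ppl] := PPL_t_is_ppl n.
by apply/eqP; rewrite eqn_leq min_k // min_ppl.
Qed.

Lemma SP_t_is_ppl K N : ppl N = K -> (forall m, m < N -> ppl m < K) -> SP_t_is K N.
Proof.
move=> <- ppl_lt; split=> [|m lt_mN /PPL_t_is_uniq E]; first exact: PPL_t_is_ppl.
by have := ppl_lt m lt_mN; rewrite E ltnn.
Qed.

(** * First occurrences *)

Lemma ppl_digit p c : c < 4 ->
  maxn (ppl (4 * p + c)) (ppl (4 * p + c).+1) <= minn (ppl p) (ppl p.+1) + 2 /\
  minn (ppl (4 * p + c)) (ppl (4 * p + c).+1) <= maxn (ppl p) (ppl p.+1) + 1.
Proof.
case: c => [|[|[|[|c]]]] // _; have := ppl_succ p.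
- by rewrite addn0 -[(4 * p).+1]addn1 ppl4 ppl4_1; lia.
- by rewrite -[(4 * p + 1).+1]addn1 -addnA ppl4_1 ppl4_2; lia.
- by rewrite -[(4 * p + 2).+1]addn1 -addnA ppl4_2 ppl4_3; lia.
- by rewrite (_ : (4 * p + 3).+1 = 4 * p.+1) ?ppl4_3 ?ppl4; lia.
Qed.

Lemma ppl_16mul_min p c : c < 16 ->
  minn (ppl (16 * p + c)) (ppl (16 * p + c).+1) <= minn (ppl p) (ppl p.+1) + 3.
Proof.
move=> lt_c16; have -> : 16 * p + c = 4 * (4 * p + c %/ 4) + c %% 4 by lia.
have [_ min_le] := ppl_digit (4 * p + c %/ 4) (ltn_pmod c (isT : 0 < 4)).
have lt_q4 : c %/ 4 < 4 by rewrite ltn_divLR.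
have [max_le _] := ppl_digit p lt_q4; lia.
Qed.

Lemma expn4_oddS j : 4 ^ (2 * j.+1).+1 = 16 * 4 ^ (2 * j).+1.
Proof. by rewrite (_ : (2 * j.+1).+1 = (2 * j).+3) ?expnS ?mulnA //; lia. Qed.

Lemma mulnDdivmod p q b w : p * (q * b) + w = (q * p + w %/ b) * b + w %% b.
Proof. by rewrite {1}(divn_eq w b); nia. Qed.

Lemma ppl_append_odd j p w : w < 4 ^ (2 * j).+1 ->
  ppl (p * 4 ^ (2 * j).+1 + w) <= minn (ppl p) (ppl p.+1) + 3 * j + 2.
Proof.
elim: j p w => [|j IH] p w.
  by rewrite expn1 => lt_w4; have [+ _] := ppl_digit p lt_w4; rewrite mulnC; lia.
rewrite expn4_oddS mulnDdivmod; set B := 4 ^ (2 * j).+1 => lt_w.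
have B_gt0 : 0 < B by rewrite expn_gt0.
have := IH (16 * p + w %/ B) (w %% B) (ltn_pmod w B_gt0); rewrite -/B.
have lt_q16 : w %/ B < 16 by rewrite ltn_divLR // mulnC.
have := ppl_16mul_min p lt_q16; lia.
Qed.

Lemma base4_cons a ds : base4 (a :: ds) = a * 4 ^ size ds + base4 ds.
Proof.
rewrite /base4 /= mul0n add0n.
elim: ds a => [|d ds IH] a /=; first by rewrite muln1 addn0.
by rewrite IH [X in _ = _ + X]IH mul0n add0n expnS; lia.
Qed.

Lemma base4_rcons2 ds : base4 (ds ++ [:: 2]) = base4 ds * 4 + 2.
Proof. by rewrite /base4 foldl_cat. Qed.

Lemma size_rep12 j : size (rep12 j) = 2 * j.
Proof. by elim: j => [|j IH] //; rewrite /rep12 /= -/(rep12 j) IH; lia. Qed.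

Lemma base4_cons_rep12S a j : base4 (a :: rep12 j.+1) = base4 (16 * a + 6 :: rep12 j).
Proof. by rewrite /base4 /= !mul0n !add0n; congr foldl; lia. Qed.

Lemma ppl_16mul_add6 a : ppl a <= ppl a.+1 ->
  ppl (16 * a + 6) = ppl a + 3 /\ ppl (16 * a + 6) <= ppl (16 * a + 6).+1.
Proof.
have -> : 16 * a + 6 = 4 * (4 * a + 1) + 2 by lia.
have -> : (4 * (4 * a + 1) + 2).+1 = 4 * (4 * a + 1) + 3 by lia.
rewrite ppl4_2 ppl4_3 (_ : (4 * a + 1).+1 = 4 * a + 2) ?ppl4_1 ?ppl4_2 //; lia.
Qed.

Lemma ppl_rep12 a j : ppl a <= ppl a.+1 ->
  ppl (base4 (a :: rep12 j)) = ppl a + 3 * j /\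
  ppl (base4 (a :: rep12 j)) <= ppl (base4 (a :: rep12 j)).+1.
Proof.
elim: j a => [|j IH] a le_a; first by rewrite base4_cons addn0 muln1 addn0.
rewrite base4_cons_rep12S; have [E le] := ppl_16mul_add6 le_a.
by have := IH _ le; rewrite E; lia.
Qed.

Lemma ppl_16mul_add_lt6 p c : c < 6 -> ppl (16 * p + c) <= ppl p + 2.
Proof.
have := ppl_succ p; case: c => [|[|[|[|[|[|c]]]]]] // + _.
- by rewrite addn0 (_ : 16 * p = 4 * (4 * p)) ?ppl4 //; lia.
- by rewrite (_ : 16 * p + 1 = 4 * (4 * p) + 1) ?ppl4_1 ?ppl4 //; lia.
- have -> : 16 * p + 2 = 4 * (4 * p) + 2 by lia.
  by rewrite ppl4_2 ppl4 -(addn1 (4 * p)) ppl4_1; lia.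
- have -> : 16 * p + 3 = 4 * (4 * p) + 3 by lia.
  by rewrite ppl4_3 -(addn1 (4 * p)) ppl4_1; lia.
- by rewrite (_ : 16 * p + 4 = 4 * (4 * p + 1)) ?ppl4 ?ppl4_1 //; lia.
- by rewrite (_ : 16 * p + 5 = 4 * (4 * p + 1) + 1) ?ppl4_1 //; lia.
Qed.

Lemma ppl_16mul_add6_le p : ppl (16 * p + 6) <= ppl p + 3.
Proof.
rewrite (_ : 16 * p + 6 = 4 * (4 * p + 1) + 2) ?ppl4_2 ?ppl4_1 //; lia.
Qed.

Lemma ppl_append_rep12 k p w : w < base4 (rep12 k ++ [:: 2]) ->
  ppl (p * 4 ^ (2 * k).+1 + w) <= ppl p + 3 * k + 1.
Proof.
elim: k p w => [|k IH] p w.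
  rewrite expn1 mulnC; case: w => [|[|w]] // _; first by rewrite addn0 ppl4; lia.
  by rewrite ppl4_1; lia.
rewrite expn4_oddS; set B := 4 ^ (2 * k).+1; have B_gt0 : 0 < B by rewrite expn_gt0.
have -> : base4 (rep12 k.+1 ++ [:: 2]) = 6 * B + base4 (rep12 k ++ [:: 2]).
  rewrite [rep12 _]/rep12 /= -/(rep12 k) !base4_cons /= size_cat size_rep12 /= addn1.
  by rewrite [4 ^ _.+2]expnS; lia.
move=> lt_w; have [lt_w6|le_6w] := ltnP w (6 * B).
  rewrite mulnDdivmod; have lt_q6 : w %/ B < 6 by rewrite ltn_divLR // mulnC.
  have := ppl_append_odd (16 * p + w %/ B) (ltn_pmod w B_gt0); rewrite -/B.
  have := ppl_16mul_add_lt6 p lt_q6; lia.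
have -> : p * (16 * B) + w = (16 * p + 6) * B + (w - 6 * B) by nia.
have lt_w' : w - 6 * B < base4 (rep12 k ++ [:: 2]) by lia.
have := IH (16 * p + 6) _ lt_w'; rewrite -/B.
have := ppl_16mul_add6_le p; lia.
Qed.

Lemma SP_t_is_rep12 c j : ppl c <= ppl c.+1 ->
  (forall p, p < c -> minn (ppl p) (ppl p.+1) < ppl c) ->
  SP_t_is (ppl c + 3 * j + 2) (base4 (c :: rep12 j ++ [:: 2])).
Proof.
move=> le_c min_lt; rewrite -cat_cons base4_rcons2; apply: SP_t_is_ppl.
  have [E le] := ppl_rep12 j le_c.
  by rewrite mulnC ppl4_2 (minn_idPl le) E; lia.
set B := 4 ^ (2 * j).+1; have B_gt0 : 0 < B by rewrite expn_gt0.
have -> : base4 (c :: rep12 j) * 4 + 2 = c * B + base4 (rep12 j ++ [:: 2]).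
  by rewrite base4_cons base4_rcons2 size_rep12 /B expnSr; lia.
move=> m lt_m; have [lt_qc|le_cq] := ltnP (m %/ B) c.
  rewrite (divn_eq m B); have := ppl_append_odd (m %/ B) (ltn_pmod m B_gt0).
  by rewrite -/B; have := min_lt _ lt_qc; lia.
rewrite leq_divRL // in le_cq.
have lt_r : m - c * B < base4 (rep12 j ++ [:: 2]) by lia.
have := ppl_append_rep12 c lt_r; rewrite -/B (_ : c * B + (m - c * B) = m); lia.
Qed.

Theorem corollary15 :
  (forall k, SP_t_is (3 * k + 2) (base4 (rep12 k ++ [:: 2]))) /\
  (forall k, 1 <= k -> SP_t_is (3 * k) (base4 (1 :: rep12 k.-1 ++ [:: 2]))) /\
  (forall k, 1 <= k -> SP_t_is (3 * k + 1) (base4 (2 :: rep12 k.-1 ++ [:: 2]))).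
Proof.
split; [|split] => [k|[|k] //= _|[|k] //= _].
- by have := @SP_t_is_rep12 0 k; rewrite ppl0 add0n; apply.
- have -> : 3 * k.+1 = ppl 1 + 3 * k + 2 by rewrite ppl1; lia.
  by apply: SP_t_is_rep12 => // -[].
- have -> : 3 * k.+1 + 1 = ppl 2 + 3 * k + 2 by rewrite ppl2; lia.
  by apply: SP_t_is_rep12 => // -[|[]].
Qed.
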